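(* For every integer $n\ge 0$, $$\Phi^{(1)}[a; b, b'; cq^{-n}; x, y] = \frac{1}{(q/c; q)_n} \sum_{k=0}^n \begin{bmatrix} n \\ k \end{bmatrix} (-c)^{k-n} q^{\binom{n+1-k}{2}} \Phi^{(1)}[a; b, b'; c; xq^k, yq^k]$$ and $$\Phi^{(1)}[a; b, b'; cq^n; x, y] = \sum_{k=0}^n \begin{bmatrix} n \\ k \end{bmatrix} c^k q^{2\binom{k}{2}} (cq^k; q)_{n-k}\, \Phi^{(1)}[a; b, b'; cq^k; xq^k, yq^k].$$
   Context: Let $q$ be a complex number with $0<|q|<1$. For complex $z$ and integer $m\ge 0$, $(z;q)_m=\prod_{j=0}^{m-1}(1-zq^j)$, with $(z;q)_0=1$. For integers $0\le k\le n$, $\begin{bmatrix} n \\ k \end{bmatrix}=\frac{(q;q)_n}{(q;q)_k(q;q)_{n-k}}$ is the $q$-binomial coefficient, and $\binom{j}{2}=j(j-1)/2$. The $q$-Appell function $\Phi^{(1)}$ is $$\Phi^{(1)}[a; b, b'; c; x, y] = \sum_{m, n \geq 0} \frac{(a; q)_{m+n} (b; q)_m (b'; q)_n}{(q; q)_m (q; q)_n (c; q)_{m+n}} x^m y^n.$$ Identities are understood as identities of power series in $x,y$ (formal, or convergent for small $|x|,|y|$), with complex parameters chosen so that no denominator occurring vanishes. *)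

From HB Require Import structures.
From mathcomp Require Import all_boot all_order all_algebra.
From mathcomp Require Import reals.
From mathcomp Require Import complex.
Set Implicit Arguments. Unset Strict Implicit. Unset Printing Implicit Defensive.
Import Order.TTheory GRing.Theory Num.Theory.
Local Open Scope ring_scope.

Section Defs.
Variable F : fieldType.

Definition qpoch (q z : F) (m : nat) : F := \prod_(j < m) (1 - z * q ^+ j).

Definition qbinom (q : F) (n k : nat) : F :=
  qpoch q q n / (qpoch q q k * qpoch q q (n - k)).

(* A formal power series in x, y is represented by its coefficient
   function: (m, l) |-> coefficient of x^m y^l. *)
Definition fps2 := nat -> nat -> F.

Definition Phi1 (q a b b' c : F) : fps2 := fun m l =>
  qpoch q a (m + l) * qpoch q b m * qpoch q b' l
  / (qpoch q q m * qpoch q q l * qpoch q c (m + l)).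

(* the series G(x,y) := S(t x, t y) *)
Definition subst_scale (t : F) (S : fps2) : fps2 := fun m l => t ^+ (m + l) * S m l.

Definition fps_scale (s : F) (S : fps2) : fps2 := fun m l => s * S m l.
Definition fps_sum (n : nat) (S : nat -> fps2) : fps2 :=
  fun m l => \sum_(k < n.+1) S k m l.
End Defs.

(** Both identities are checked coefficientwise.  The coefficient of
    [x^m y^l] in [Phi1 q a b b' c] is a numerator independent of [c] divided
    by [(c;q)_N], with [N = m + l], and substituting [x q^k, y q^k] multiplies
    it by [q^(kN)].  Each identity thus reduces to an identity between
    reciprocals of q-Pochhammer symbols.  For the first it is the q-binomial
    theorem [sum_k [n k] y^k q^(k(k-1)/2) t^(n-k) = prod_(i<n) (t + y q^i)]
    at [t = q^N], [y = -q/c], combined with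
    [(q/c;q)_n (c;q)_N = (c q^-n;q)_N prod_(i<n) (q^N - q^(i+1)/c)].
    For the second it is the expansion
    [sum_k [n k] w^k q^(k(k-1)) (w q^k;q)_(n-k) = 1] at [w = c q^N].  Both
    sums are evaluated by induction on [n] through the q-Pascal rule. *)
From HB Require Import structures.
From mathcomp Require Import all_boot all_order all_algebra.
From mathcomp Require Import reals complex ring zify.
From mathcomp Require Import boolp.
Set Implicit Arguments. Unset Strict Implicit. Unset Printing Implicit Defensive.
Import Order.TTheory GRing.Theory Num.Theory.
Local Open Scope ring_scope.

Section QPochhammer.
Variable F : fieldType.
Implicit Types q z : F.

Lemma qpoch0 q z : qpoch q z 0 = 1.
Proof. by rewrite /qpoch big_ord0. Qed.

Lemma qpoch_base0 q m : qpoch q 0 m = 1.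
Proof. by rewrite /qpoch big1 // => i _; rewrite mul0r subr0. Qed.

Lemma qpoch_recr q z m : qpoch q z m.+1 = qpoch q z m * (1 - z * q ^+ m).
Proof. by rewrite /qpoch big_ord_recr. Qed.

Lemma qpoch_recl q z m : qpoch q z m.+1 = (1 - z) * qpoch q (z * q) m.
Proof.
rewrite /qpoch big_ord_recl expr0 mulr1; congr (_ * _).
by apply: eq_bigr => i _; rewrite lift0 exprS mulrA.
Qed.

Lemma qpochD q z m p : qpoch q z (m + p) = qpoch q z m * qpoch q (z * q ^+ m) p.
Proof.
elim: p => [|p IHp]; first by rewrite addn0 qpoch0 mulr1.
by rewrite addnS !qpoch_recr IHp exprD !mulrA.
Qed.

Lemma qpochDC q z m p :
  qpoch q z m * qpoch q (z * q ^+ m) p = qpoch q z p * qpoch q (z * q ^+ p) m.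
Proof. by rewrite -!qpochD addnC. Qed.

Lemma qpoch_neq0 q z m : (forall i, z * q ^+ i != 1) -> qpoch q z m != 0.
Proof. by move=> zqi_neq1; apply/prodf_neq0 => i _; rewrite subr_eq0 eq_sym. Qed.

Lemma qpoch_shift_neq0 q z m p :
  (forall i, z * q ^+ i != 1) -> qpoch q (z * q ^+ p) m != 0.
Proof. by move=> zqi_neq1; apply: qpoch_neq0 => i; rewrite -mulrA -exprD. Qed.

(* With [c = d q^n] this reads
   [(q/c;q)_n (c;q)_N = (c q^-n;q)_N prod_(i<n) (q^N - q^(i+1)/c)]. *)
Lemma prod_qpoch_reflect q d n N : q != 0 -> d != 0 ->
  \prod_(i < n) (q ^+ N - q / (d * q ^+ n) * q ^+ i) * qpoch q d N =
  qpoch q (q / (d * q ^+ n)) n * qpoch q (d * q ^+ n) N.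
Proof.
move=> q_neq0 d_neq0; elim: N => [|N IHN].
  by rewrite !qpoch0 !mulr1 expr0.
rewrite !qpoch_recr [RHS]mulrA -IHN.
case: n {IHN} => [|n]; first by rewrite !big_ord0 expr0 mulr1 !mul1r.
rewrite big_ord_recl big_ord_recr.
under eq_bigr => i _ do
  rewrite lift0 [q ^+ N.+1]exprS [q ^+ i.+1]exprS mulrCA -mulrBr.
rewrite big_split /= prodr_const card_ord.
have qn_neq0 : q ^+ n != 0 by rewrite expf_neq0.
set P := \prod_(i < n) _; rewrite !exprS expr0.
by field; rewrite d_neq0 q_neq0 qn_neq0.
Qed.

End QPochhammer.

Section QBinomial.
Variables (F : fieldType) (q : F).
Hypothesis qq_neq0 : forall m, qpoch q q m != 0.

Lemma qbinomn0 n : qbinom q n 0 = 1.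
Proof. by rewrite /qbinom qpoch0 subn0 mul1r divff. Qed.

Lemma qbinomnn n : qbinom q n n = 1.
Proof. by rewrite /qbinom subnn qpoch0 mulr1 divff. Qed.

Lemma qbinom_sym n k : (k <= n)%N -> qbinom q n (n - k) = qbinom q n k.
Proof. by move=> le_kn; rewrite /qbinom subKn // [qpoch q q k * _]mulrC. Qed.

(* The bound [k < n] matters: for [k > n] the truncated subtraction turns
   [qbinom q n k] into a nonzero junk value. *)
Lemma qbinomS n k : (k < n)%N ->
  qbinom q n.+1 k.+1 = q ^+ k.+1 * qbinom q n k.+1 + qbinom q n k.
Proof.
move=> /subnKC <-; set j := (n - k.+1)%N; rewrite /qbinom.
have -> : ((k.+1 + j).+1 - k.+1 = j.+1)%N by lia.
have -> : ((k.+1 + j) - k.+1 = j)%N by lia.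
have -> : ((k.+1 + j) - k = j.+1)%N by lia.
move: (qq_neq0 k.+1) (qq_neq0 j.+1).
rewrite (qpoch_recr q q (k.+1 + j)) !qpoch_recr !mulf_eq0 !negb_or.
move=> /andP[qk_neq0 qk1_neq0] /andP[qj_neq0 qj1_neq0].
rewrite exprD !exprS.
by field; rewrite qk_neq0 qj_neq0 qk1_neq0 qj1_neq0.
Qed.

Lemma big_qbinomS n (G : nat -> F) :
  \sum_(0 <= k < n.+2) qbinom q n.+1 k * G k =
  \sum_(0 <= k < n.+1) q ^+ k * qbinom q n k * G k +
  \sum_(0 <= k < n.+1) qbinom q n k * G k.+1.
Proof.
rewrite big_nat_recl // big_nat_recr //= [in RHS]big_nat_recl //.
rewrite [X in _ = _ + X]big_nat_recr //=.
have -> : \sum_(0 <= i < n) qbinom q n.+1 i.+1 * G i.+1 =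
    \sum_(0 <= i < n) q ^+ i.+1 * qbinom q n i.+1 * G i.+1 +
    \sum_(0 <= i < n) qbinom q n i * G i.+1.
  rewrite -big_split; apply: eq_big_nat => i /andP[_ lt_in].
  by rewrite qbinomS // mulrDl mulrA.
rewrite !qbinomn0 !qbinomnn expr0.
set A := \sum_(0 <= i < n) _; set B := \sum_(0 <= i < n) _.
ring.
Qed.

Lemma qbinomial_theorem n y t :
  \sum_(0 <= k < n.+1) qbinom q n k * (y ^+ k * q ^+ 'C(k, 2) * t ^+ (n - k)) =
  \prod_(i < n) (t + y * q ^+ i).
Proof.
elim: n y => [|n IHn] y; first by rewrite big_nat1 big_ord0 qbinomn0 !expr0 !mul1r.
set S := \sum_(0 <= k < n.+1)
  qbinom q n k * ((y * q) ^+ k * q ^+ 'C(k, 2) * t ^+ (n - k)).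
rewrite big_qbinomS.
have -> : \sum_(0 <= k < n.+1) q ^+ k * qbinom q n k *
    (y ^+ k * q ^+ 'C(k, 2) * t ^+ (n.+1 - k)) = t * S.
  rewrite mulr_sumr; apply: eq_big_nat => k /andP[_ le_kn].
  by rewrite subSn // exprS exprMn; ring.
have -> : \sum_(0 <= k < n.+1) qbinom q n k *
    (y ^+ k.+1 * q ^+ 'C(k.+1, 2) * t ^+ (n.+1 - k.+1)) = y * S.
  rewrite mulr_sumr; apply: eq_big_nat => k _.
  by rewrite subSS binS bin1 exprD exprS exprMn; ring.
rewrite /S IHn -mulrDl big_ord_recl expr0 mulr1; congr (_ * _).
by apply: eq_bigr => i _; rewrite lift0 exprS mulrA.
Qed.

Lemma qbinomial_theorem_rev n y t :
  \sum_(0 <= k < n.+1) qbinom q n k * (y ^+ (n - k) * q ^+ 'C(n - k, 2) * t ^+ k) =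
  \prod_(i < n) (t + y * q ^+ i).
Proof.
rewrite -qbinomial_theorem big_nat_rev /= add0n.
apply: eq_big_nat => k /andP[_ lt_kn1].
by rewrite subSS qbinom_sym ?subKn // -ltnS.
Qed.

Lemma sum_qbinom_qpoch_eq1 n w :
  \sum_(0 <= k < n.+1)
    qbinom q n k * (w ^+ k * q ^+ (2 * 'C(k, 2)) * qpoch q (w * q ^+ k) (n - k)) = 1.
Proof.
elim: n w => [|n IHn] w; first by rewrite big_nat1 qbinomn0 !expr0 qpoch0 !mul1r.
rewrite big_qbinomS -(IHn (w * q)) -big_split /=.
apply: eq_big_nat => k /andP[_ le_kn].
rewrite subSn // subSS qpoch_recl binS bin1 mulnDr exprD.
have -> : w * q ^+ k * q = w * q * q ^+ k by rewrite mulrAC.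
have -> : w * q ^+ k.+1 = w * q * q ^+ k by rewrite exprS mulrA.
set Q := qpoch _ _ _; rewrite !mul2n -!addnn !exprD exprS exprMn.
ring.
Qed.

Lemma qbinomial_theorem_inv n c t :
  \sum_(k < n.+1) qbinom q n k * (- c) ^ (k%:Z - n%:Z) * q ^+ 'C(n.+1 - k, 2) * t ^+ k =
  \prod_(i < n) (t - q / c * q ^+ i).
Proof.
under [RHS]eq_bigr do rewrite -mulNr.
rewrite -qbinomial_theorem_rev big_mkord; apply: eq_bigr => -[k /= lt_kn1] _.
have [j ->] : exists j, n = (k + j)%N by exists (n - k)%N; rewrite subnKC // -ltnS.
have -> : ((k + j).+1 - k = j.+1)%N by lia.
have -> : (k + j - k = j)%N by lia.
have -> : k%:Z - (k + j)%:Z = - j%:Z by rewrite PoszD opprD addrA subrr add0r.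
rewrite -exprnN binS bin1 exprD -mulrN -invrN exprMn exprVn.
ring.
Qed.

End QBinomial.

Lemma Phi1E (F : fieldType) (q a b b' c : F) m l :
  Phi1 q a b b' c m l = Phi1 q a b b' 0 m l / qpoch q c (m + l).
Proof. by rewrite /Phi1 qpoch_base0 mulr1 invfM mulrA. Qed.

Lemma Phi1_expand (F : fieldType) (q a b b' c r : F) n (s c_ : nat -> F) :
    (forall N, (qpoch q c N)^-1 =
               r * \sum_(k < n.+1) s k * (q ^+ k) ^+ N / qpoch q (c_ k) N) ->
  Phi1 q a b b' c =
  fps_scale r (fps_sum n (fun k =>
    fps_scale (s k) (subst_scale (q ^+ k) (Phi1 q a b b' (c_ k))))).
Proof.
move=> qpochV; apply/funext => m; apply/funext => l.
rewrite /fps_scale /fps_sum /subst_scale Phi1E qpochV mulrCA mulr_sumr.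
congr (_ * _); apply: eq_bigr => k _; rewrite [in RHS]Phi1E.
by ring.
Qed.

Section Phi1Coefficients.
Variables (F : fieldType) (q : F).
Hypothesis qq_neq0 : forall m, qpoch q q m != 0.

Lemma qpochV_shift_down c n N : q != 0 -> c != 0 ->
    (forall j, c * q ^- n * q ^+ j != 1) -> qpoch q (q / c) n != 0 ->
  (qpoch q (c * q ^- n) N)^-1 =
  (qpoch q (q / c) n)^-1 * \sum_(k < n.+1)
    qbinom q n k * (- c) ^ (k%:Z - n%:Z) * q ^+ 'C(n.+1 - k, 2) * (q ^+ k) ^+ N /
    qpoch q c N.
Proof.
move=> q_neq0 c_neq0 dqj_neq1 qc_neq0; set d := c * q ^- n.
have qn_neq0 : q ^+ n != 0 by rewrite expf_neq0.
have d_neq0 : d != 0 by rewrite mulf_neq0 // invr_neq0.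
have cE : c = d * q ^+ n by rewrite /d mulfVK.
have qd_neq0 : qpoch q d N != 0 by apply: qpoch_neq0.
have qc_N_neq0 : qpoch q c N != 0 by rewrite cE qpoch_shift_neq0.
rewrite -mulr_suml.
under eq_bigr do rewrite exprAC.
rewrite qbinomial_theorem_inv //.
have := prod_qpoch_reflect n N q_neq0 d_neq0; rewrite -cE => reflectE.
rewrite -[\prod_(i < n) _](mulfK qd_neq0) reflectE.
by field; rewrite qc_neq0 qc_N_neq0 qd_neq0.
Qed.

Lemma qpochV_shift_up c n N : (forall j, c * q ^+ j != 1) ->
  (qpoch q (c * q ^+ n) N)^-1 =
  \sum_(k < n.+1) qbinom q n k * c ^+ k * q ^+ (2 * 'C(k, 2)) *
    qpoch q (c * q ^+ k) (n - k) * (q ^+ k) ^+ N / qpoch q (c * q ^+ k) N.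
Proof.
move=> cqj_neq1.
rewrite -[LHS]mulr1 -(sum_qbinom_qpoch_eq1 qq_neq0 n (c * q ^+ N)).
rewrite big_mkord mulr_sumr; apply: eq_bigr => -[k /=]; rewrite ltnS => le_kn _.
have := qpochDC q (c * q ^+ k) (n - k) N.
rewrite -mulrA -exprD subnKC // [c * q ^+ k * q ^+ N]mulrAC => shiftE.
have qn_neq0 := qpoch_shift_neq0 N n cqj_neq1.
have qk_neq0 := qpoch_shift_neq0 N k cqj_neq1.
rewrite -[qpoch q (c * q ^+ N * q ^+ k) _](mulKf qk_neq0) -shiftE exprMn exprAC.
by field; rewrite qn_neq0 qk_neq0.
Qed.

End Phi1Coefficients.

Lemma qpoch_qq_neq0 (F : numFieldType) (q : F) m : `|q| < 1 -> qpoch q q m != 0.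
Proof.
move=> q_lt1; apply: qpoch_neq0 => i; rewrite -exprS.
have : `|q ^+ i.+1| < 1 by rewrite normrX exprn_ilt1 ?normr_ge0.
by apply: contraTneq => ->; rewrite normr1 ltxx.
Qed.

Lemma fps_scale1 (F : fieldType) (S : fps2 F) : fps_scale 1 S = S.
Proof. by apply/funext => m; apply/funext => l; rewrite /fps_scale mul1r. Qed.

Theorem theorem5 (R : realType) (q a b b' c : R[i]) (n : nat) :
  0 < `|q| < 1 ->
  (* first identity: denominators (c q^{-n}; q)_j, (q/c; q)_n nonzero, c <> 0 *)
  ((c != 0 -> (forall j : nat, c * q ^- n * q ^+ j != 1) ->
      qpoch q (q / c) n != 0 ->
    Phi1 q a b b' (c * q ^- n) =
    fps_scale (qpoch q (q / c) n)^-1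
      (fps_sum n (fun k =>
         fps_scale (qbinom q n k * (- c) ^ (k%:Z - n%:Z) * q ^+ 'C(n.+1 - k, 2))
           (subst_scale (q ^+ k) (Phi1 q a b b' c)))))
  /\
  (* second identity: denominators (c q^j; q) nonzero *)
  ((forall j : nat, c * q ^+ j != 1) ->
    Phi1 q a b b' (c * q ^+ n) =
    fps_sum n (fun k =>
       fps_scale (qbinom q n k * c ^+ k * q ^+ (2 * 'C(k, 2)) * qpoch q (c * q ^+ k) (n - k))
         (subst_scale (q ^+ k) (Phi1 q a b b' (c * q ^+ k)))))).
Proof.
move=> /andP[q_gt0 q_lt1].
have q_neq0 : q != 0 by rewrite -normr_gt0.
have qq_neq0 m : qpoch q q m != 0 by exact: qpoch_qq_neq0.
split.
- move=> c_neq0 dqj_neq1 qc_neq0; apply: Phi1_expand => N.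
  exact: qpochV_shift_down.
- move=> cqj_neq1; rewrite -[fps_sum _ _]fps_scale1; apply: Phi1_expand => N.
  by rewrite mul1r qpochV_shift_up.
Qed.
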